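(* Suppose $\sum_{r:\rho_r\le 1/(4k^2)}\rho_r(1-\rho_r)^k\le\frac{1-\tau}{2}$, and let $\Delta\in(0,1)$ and $\rho_{\max}:=\max_r\rho_r$. (i) If $\rho_{\max}\le\frac12$ and $N\ge 132k^2\ln(2R/\Delta)$, then with probability at least $1-\Delta$, $1-\widehat\tau\ge\frac{1-\tau}{4}$. (ii) If $\rho_{\max}>\frac12$ and $N\ge164k^2\ln(4R/\Delta)+\frac{25\ln(2/\Delta)}{1-\rho_{\max}}$, then with probability at least $1-\Delta$, $1-\widehat\tau\ge\frac{1-\tau}{8}$.
   Context: Let $R\ge 2$ be an integer and $\rho=(\rho_1,\dots,\rho_R)$ a probability vector with $\rho_r>0$ for all $r$. Let $Y_1,\dots,Y_N$ be i.i.d. labels with $\mathbb P(Y_j=r)=\rho_r$, $N_r=|\{j:Y_j=r\}|$, $\widehat\rho_r=N_r/N$. Fix an integer $k\ge1$. Set $\tau:=1-\sum_{r}\rho_r(1-\rho_r)^k$ and $\widehat\tau:=1-\sum_r\widehat\rho_r(1-\widehat\rho_r)^k$. *)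

From HB Require Import structures.
From mathcomp Require Import all_boot all_order all_algebra.
From mathcomp Require Import reals exp.
Set Implicit Arguments. Unset Strict Implicit. Unset Printing Implicit Defensive.
Import Order.TTheory GRing.Theory Num.Theory.
Local Open Scope ring_scope.

(* Labels take values in 'I_m (m = R in the paper); a sample of size N is
   y : {ffun 'I_N -> 'I_m}, y j = Y_{j+1}. *)

Definition sample_prob {R : realType} {m N : nat} (rho : 'I_m -> R)
  (E : pred {ffun 'I_N -> 'I_m}) : R :=
  \sum_(y | E y) \prod_(j < N) rho (y j).

Definition label_count {m N : nat} (y : {ffun 'I_N -> 'I_m}) (r : 'I_m) : nat :=
  #|[set j : 'I_N | y j == r]|.

Definition rho_hat {R : realType} {m N : nat} (y : {ffun 'I_N -> 'I_m}) (r : 'I_m) : R :=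
  (label_count y r)%:R / N%:R.

Definition tau_of {R : realType} {m : nat} (k : nat) (rho : 'I_m -> R) : R :=
  1 - \sum_(r < m) rho r * (1 - rho r) ^+ k.

Definition rho_max {R : realType} {m : nat} (rho : 'I_m -> R) : R :=
  \big[Num.max/0]_(r < m) rho r.

From HB Require Import structures.
From mathcomp Require Import all_boot all_order all_algebra.
From mathcomp Require Import reals sequences exp.
From mathcomp Require Import ring lra.
Import Order.TTheory GRing.Theory Num.Theory.
Local Open Scope ring_scope.

(* Write [1 - tau] as [\sum_r phi k (rho r)] with [phi k x = x (1 - x)^k].  If the
   empirical frequency of a label lies between [3/4 rho] and [rho + (1 - rho)/(3k)],
   Bernoulli's inequality shows that [phi k] drops by at most a factor 2, and Chernoff
   bounds on the binomial label counts make this fail with probability at most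
   [2 exp(-l)] once [N >= 132 k^2 l] and [1/(4k^2) < rho <= 1/2].  By hypothesis the
   labels above [1/(4k^2)] carry half of [1 - tau], so a union bound gives (i).  In (ii)
   the dominant label [s] is either negligible (when [k >= 2] and [rho_s >= 4/5], since
   then [4 phi k rho_s <= (1 - rho_s) rho_s^k <= 1 - tau]) or its term is estimated
   within a factor 4 by concentrating the counts of [s] and of its complement. *)

Section ExpBounds.
Context {R : realType}.
Implicit Types x : R.

Lemma expR_ge1DxDsqr x : 0 <= x -> 1 + x + x ^+ 2 / 2 <= expR x.
Proof.
move=> x0.
have -> : 1 + x + x ^+ 2 / 2 = series (exp_coeff x) 3.
  rewrite /series /= !big_nat_recl // big_geq // /exp_coeff /=.
  by rewrite expr0 expr1 !divr1 addr0 addrA.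
apply: nondecreasing_cvgn_le; last exact: is_cvg_series_exp_coeff.
by apply: nondecreasing_series => n _ _; exact: exp_coeff_ge0.
Qed.

Lemma expRN_le x : 0 <= x -> expR (- x) <= 1 - x + x ^+ 2 / 2.
Proof.
move=> x0; have ex := expR_ge1DxDsqr x x0.
have pos : 0 < 1 + x + x ^+ 2 / 2 by rewrite expr2; nra.
rewrite expRN (@le_trans _ _ (1 + x + x ^+ 2 / 2)^-1) // ?lef_pV2 ?posrE ?expR_gt0 //.
rewrite -[leLHS]mul1r ler_pdivrMr //; rewrite expr2 in pos *; nra.
Qed.

Lemma expR_le_inv x : x < 1 -> expR x <= (1 - x)^-1.
Proof.
move=> x1; have := expR_ge1Dx (- x); rewrite expRN.
rewrite -[X in _ <= X -> _]div1r ler_pdivlMr ?expR_gt0 //.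
by rewrite -ler_pdivlMl ?subr_gt0 // mulr1.
Qed.

Lemma expRN_ln x : 0 < x -> expR (- ln x) = x^-1.
Proof. by move=> x0; rewrite expRN lnK. Qed.

End ExpBounds.

Section SumBounds.
Context {R : realFieldType}.

Lemma ler_sum_sub {I : finType} {A B : pred I} {F : I -> R} :
  (forall i, 0 <= F i) -> (forall i, A i -> B i) ->
  \sum_(i | A i) F i <= \sum_(i | B i) F i.
Proof.
move=> F0 AB; rewrite [leRHS](bigID A) /= (eq_bigl A) => [|i]; last exact/andb_idl/AB.
by rewrite lerDl sumr_ge0.
Qed.

Lemma ler_sum_restrict {I : finType} {A : pred I} {F G : I -> R} :
  (forall i, 0 <= G i) -> (forall i, A i -> F i <= G i) ->
  \sum_(i | A i) F i <= \sum_i G i.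
Proof. by move=> G0 FG; apply: le_trans (ler_sum _ FG) (ler_sum_sub G0 _). Qed.

Lemma sum_le_card (I : finType) (A : pred I) (F : I -> R) c :
  0 <= c -> (forall i, A i -> F i <= c) -> \sum_(i | A i) F i <= #|I|%:R * c.
Proof.
move=> c0 Fc; apply: le_trans (ler_sum_restrict (fun=> c0) Fc) _.
by rewrite sumr_const mulr_natl.
Qed.

Section Halving.
Context {I : finType} {H : pred I} {F G : I -> R}.
Hypotheses (F_ge0 : forall i, 0 <= F i) (G_ge0 : forall i, 0 <= G i).
Hypothesis light_le_half : \sum_(i | ~~ H i) F i <= (\sum_i F i) / 2.

Lemma sum_ge_quarter : (forall i, H i -> F i / 2 <= G i) -> (\sum_i F i) / 4 <= \sum_i G i.
Proof.
move=> FG; have heavy := ler_sum_restrict G_ge0 FG; rewrite -big_distrl /= in heavy.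
have splitS : \sum_i F i = \sum_(i | H i) F i + \sum_(i | ~~ H i) F i by rewrite (bigID H).
by have := light_le_half; lra.
Qed.

Lemma sum_ge_eighth s : H s -> (forall i, H i -> i != s -> F i / 2 <= G i) ->
  F s / 4 <= G s \/ 4 * F s <= \sum_i F i -> (\sum_i F i) / 8 <= \sum_i G i.
Proof.
move=> Hs FG Fs.
have splitS : \sum_i F i = \sum_(i | ~~ H i) F i + (F s + \sum_(i | H i && (i != s)) F i).
  by rewrite (bigID H) /= addrC (bigD1 s Hs).
have rest : (\sum_(i | H i && (i != s)) F i) / 2 <= \sum_(i | i != s) G i.
  rewrite big_distrl /=; apply: (@le_trans _ _ (\sum_(i | H i && (i != s)) G i)).
    by apply: ler_sum => i /andP[]; exact: FG.
  by apply: ler_sum_sub => // i /andP[].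
have heavy0 : 0 <= \sum_(i | H i && (i != s)) F i by exact: sumr_ge0.
rewrite [X in _ <= X](bigD1 s) //=; have := G_ge0 s; have := light_le_half.
by case: Fs; lra.
Qed.

End Halving.

End SumBounds.

Section Phi.
Context {R : realFieldType}.
Implicit Types a h p t : R.

Definition phi (k : nat) (x : R) : R := x * (1 - x) ^+ k.

Lemma bernoulli_ineq k t : 0 <= t <= 1 -> 1 - k%:R * t <= (1 - t) ^+ k.
Proof.
move=> /andP[t0 t1]; elim: k => [|k IH]; first by rewrite mul0r subr0 expr0.
have : 0 <= k%:R * t * t by rewrite !mulr_ge0.
have := ler_wpM2l (_ : 0 <= 1 - t) IH.
by rewrite exprS -natr1; nra.
Qed.

Lemma phi_ge0 k x : 0 <= x <= 1 -> 0 <= phi k x.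
Proof. by move=> /andP[x0 x1]; rewrite mulr_ge0 // exprn_ge0 // subr_ge0. Qed.

Lemma phi_perturb_ge k a t p h :
  0 <= a -> 0 <= p <= 1 -> 0 <= t <= 1 -> k%:R * t <= 1 ->
  a * p <= h -> (1 - p) * (1 - t) <= 1 - h ->
  a * (1 - k%:R * t) * phi k p <= phi k h.
Proof.
move=> a0 /andP[p0 p1] /andP[t0 t1] kt ph ph'.
have qk0 : 0 <= (1 - p) ^+ k by rewrite exprn_ge0 // subr_ge0.
have bracket0 : 0 <= (1 - p) * (1 - t) by rewrite mulr_ge0 // subr_ge0.
have : (1 - p) ^+ k * (1 - k%:R * t) <= (1 - h) ^+ k.
  apply: le_trans (lerXn2r k bracket0 (le_trans bracket0 ph') ph').
  by rewrite exprMn ler_wpM2l // bernoulli_ineq ?t0.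
have kt' : 0 <= 1 - k%:R * t by rewrite subr_ge0.
move=> /(ler_pM (mulr_ge0 a0 p0) (mulr_ge0 qk0 kt') ph).
by rewrite /phi; nra.
Qed.

Lemma phi_ge_half k p h : (0 < k)%N -> 0 <= p <= 1 ->
  p * (1 - 1 / 4) < h -> h < p + (1 - p) / (3 * k%:R) -> phi k p / 2 <= phi k h.
Proof.
move=> k0 p01 hlo hhi; have kR : 1 <= k%:R :> R by rewrite ler1n.
set t := (3 * k%:R)^-1 in hhi.
have kt : k%:R * t = 1 / 3 by rewrite /t; field; lra.
have t01 : 0 <= t <= 1 by rewrite /t invr_ge0 invf_le1; lra.
have -> : phi k p / 2 = 3 / 4 * (1 - k%:R * t) * phi k p by rewrite kt; field.
by apply: phi_perturb_ge => //; lra.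
Qed.

Lemma phi_ge_quarter k p h : (0 < k)%N -> 0 <= p <= 1 ->
  p * (1 - 1 / 2) < h -> (1 - p) * (1 - 1 / (2 * k%:R)) < 1 - h ->
  phi k p / 4 <= phi k h.
Proof.
move=> k0 p01 hlo hhi; have kR : 1 <= k%:R :> R by rewrite ler1n.
set t := 1 / (2 * k%:R) in hhi.
have kt : k%:R * t = 1 / 2 by rewrite /t; field; lra.
have t01 : 0 <= t <= 1 by rewrite /t div1r invr_ge0 invf_le1; lra.
have -> : phi k p / 4 = 1 / 2 * (1 - k%:R * t) * phi k p by rewrite kt; field.
by apply: phi_perturb_ge => //; lra.
Qed.

Lemma phi_le_dominant k p : (1 < k)%N -> 4 / 5 <= p <= 1 -> 4 * phi k p <= (1 - p) * p ^+ k.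
Proof.
case: k => [|[|n]] // _ /andP[p45 p1].
have tail : 4 * (1 - p) ^+ n.+1 <= p ^+ n.+1.
  elim: n => [|n IH]; first by rewrite !expr1; lra.
  rewrite [_ ^+ n.+2]exprS [p ^+ n.+2]exprS.
  have := ler_wpM2l (_ : 0 <= 1 - p) IH; have := exprn_ge0 n.+1 (_ : 0 <= p).
  by nra.
have := ler_wpM2l (_ : 0 <= p * (1 - p)) tail.
by rewrite /phi !exprS; nra.
Qed.

End Phi.

Lemma one_sub_tau {R : realType} {m : nat} k (rho : 'I_m -> R) :
  1 - tau_of k rho = \sum_(r < m) phi k (rho r).
Proof. by rewrite /tau_of opprB addrC subrK. Qed.

Section LabelDistribution.
Context {R : realType} {m : nat} (rho : 'I_m -> R).
Hypotheses (rho_ge0 : forall r, 0 <= rho r) (rho_sum1 : \sum_(r < m) rho r = 1).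

Definition mass (A : pred 'I_m) : R := \sum_(i | A i) rho i.

Lemma mass_ge0 A : 0 <= mass A.
Proof. exact: sumr_ge0. Qed.

Lemma mass_le1 A : mass A <= 1.
Proof. by rewrite -rho_sum1 [leRHS](bigID A) lerDl sumr_ge0. Qed.

Lemma mass_pred1 r : mass (pred1 r) = rho r.
Proof. exact: big_pred1_eq. Qed.

Lemma mass_predC1 r : mass (predC (pred1 r)) = 1 - rho r.
Proof. by rewrite -rho_sum1 [X in _ = X - _](bigD1 r) //= addrC addrK. Qed.

Lemma rho_le1 r : rho r <= 1.
Proof. by rewrite -mass_pred1 mass_le1. Qed.

Lemma rho_le_compl r s : r != s -> rho r <= 1 - rho s.
Proof. by move=> rs; rewrite -mass_predC1 /mass (bigD1 r) //= lerDl sumr_ge0. Qed.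

(* Every other label has [1 - rho r >= rho s], and together they weigh [1 - rho s]. *)
Lemma sum_phi_ge_dominant k s : (1 - rho s) * rho s ^+ k <= \sum_r phi k (rho r).
Proof.
rewrite (bigD1 s) //= -[leLHS]add0r lerD ?phi_ge0 ?rho_ge0 ?rho_le1 //.
rewrite -mass_predC1 /mass big_distrl /=; apply: ler_sum => r rs.
apply: ler_wpM2l => //; apply: lerXn2r; rewrite ?nnegrE ?rho_ge0 ?subr_ge0 ?rho_le1 //.
by rewrite lerBrDl -lerBrDr rho_le_compl.
Qed.

Section Sampling.
Context {N : nat}.

Local Notation sample := {ffun 'I_N -> 'I_m}.
Local Notation P := (sample_prob rho).
Implicit Types (E F : pred sample) (y : sample).

Definition weight (y : sample) : R := \prod_(j < N) rho (y j).

Definition count_in (A : pred 'I_m) (y : sample) : nat := #|[set j : 'I_N | A (y j)]|.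

Definition freq (A : pred 'I_m) (y : sample) : R := (count_in A y)%:R / N%:R.

Lemma weight_ge0 y : 0 <= weight y.
Proof. exact: prodr_ge0. Qed.

Lemma sum_weight_expr_count A c :
  \sum_y weight y * c ^+ count_in A y = (1 - mass A + mass A * c) ^+ N.
Proof.
have factor y : weight y * c ^+ count_in A y
    = \prod_(j < N) (rho (y j) * (if A (y j) then c else 1)).
  by rewrite big_split /= -big_mkcond prodr_const /count_in cardsE.
rewrite (eq_bigr _ (fun y _ => factor y)).
rewrite -(bigA_distr_bigA (fun _ i => rho i * (if A i then c else 1))) prodr_const card_ord.
have split1 : 1 = mass A + \sum_(i | ~~ A i) rho i by rewrite -rho_sum1 (bigID A).
congr (_ ^+ _); rewrite (bigID A) /= [in RHS]split1 /mass big_distrl /=.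
rewrite (eq_bigr (fun i => rho i * c)) => [|i ->] //.
by rewrite [X in _ + X](eq_bigr rho) => [|i /negbTE ->]; [ring | rewrite mulr1].
Qed.

Lemma sum_weight : \sum_y weight y = 1.
Proof.
move: (sum_weight_expr_count pred0 1); rewrite mulr1 subrK expr1n => <-.
by apply: eq_bigr => y _; rewrite expr1n mulr1.
Qed.

Lemma sample_prob_le E F : (forall y, E y -> F y) -> P E <= P F.
Proof. by move=> EF; apply: ler_sum_sub => // y; exact: weight_ge0. Qed.

Lemma sample_probU E F : P (fun y => E y || F y) <= P E + P F.
Proof.
rewrite /sample_prob (bigID E) /= lerD //.
  by rewrite (eq_bigl E) // => y; apply/andb_idl => ->.
by apply: ler_sum_sub => [y|y /andP[]]; [exact: weight_ge0 | case: (E y)].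
Qed.

Lemma sample_prob_exists (I : finType) (A : pred I) (B : I -> pred sample) :
  P (fun y => [exists i, A i && B i y]) <= \sum_(i | A i) P (B i).
Proof.
rewrite /sample_prob (exchange_big_dep predT) //=.
apply: (@le_trans _ _
  (\sum_(y | [exists i, A i && B i y]) \sum_(i | A i && B i y) weight y)).
  apply: ler_sum => y /existsP[i /andP[Ai Bi]].
  by rewrite (bigD1 i) ?Ai ?Bi //= lerDl sumr_ge0 // => j _; exact: weight_ge0.
by apply: ler_sum_sub => // y; apply: sumr_ge0 => i _; exact: weight_ge0.
Qed.

Lemma sample_prob_compl E B : (forall y, ~~ B y -> E y) -> 1 - P B <= P E.
Proof.
move=> BE; have : \sum_(y | ~~ B y) weight y <= P E := sample_prob_le _ _ BE.
have -> : P B = \sum_(y | B y) weight y by [].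
by rewrite -sum_weight [X in X - _](bigID B) /=; lra.
Qed.

Lemma sample_prob_le_mean E g : (forall y, 0 <= g y) -> (forall y, E y -> 1 <= g y) ->
  P E <= \sum_y weight y * g y.
Proof.
move=> g0 gE; apply: (@le_trans _ _ (\sum_(y | E y) weight y * g y)).
  by apply: ler_sum => y Ey; rewrite ler_peMr ?weight_ge0 ?gE.
by apply: ler_sum_sub => // y; rewrite mulr_ge0 ?weight_ge0.
Qed.

Lemma count_chernoff A x a :
  P (fun y => a <= x * (count_in A y)%:R) <= expR (N%:R * mass A * (expR x - 1) - a).
Proof.
pose g y := expR x ^+ count_in A y * expR (- a).
apply: le_trans (sample_prob_le_mean _ g _ _) _ => [y|y ha|].
- by rewrite /g mulr_ge0 ?exprn_ge0 ?expR_ge0.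
- rewrite /g -expRM_natl -expRD (le_trans _ (expR_ge1Dx _)) //.
  by rewrite lerDl subr_ge0 mulrC.
under eq_bigr => y _ do rewrite /g mulrA.
rewrite -big_distrl /= sum_weight_expr_count.
have base0 : 0 <= 1 - mass A + mass A * expR x.
  by have := mass_le1 A; have := mass_ge0 A; have := expR_ge0 x; nra.
have base_le : 1 - mass A + mass A * expR x <= expR (mass A * (expR x - 1)).
  by apply: le_trans (expR_ge1Dx _); lra.
apply: le_trans (ler_wpM2r (expR_ge0 _) (lerXn2r N base0 (expR_ge0 _) base_le)) _.
by rewrite -expRM_natl -expRD mulrA.
Qed.

Definition label_far (k : nat) (r : 'I_m) (y : sample) : bool :=
  (rho_hat y r <= rho r * (1 - 1 / 4))
  || (rho r + (1 - rho r) / (3 * k%:R) <= rho_hat y r).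

(* For the dominant label, [(1 - rho)^k] needs [1 - rho_hat] up to a relative error, so
   it is the count of the complement that has to concentrate. *)
Definition dominant_far (k : nat) (r : 'I_m) (y : sample) : bool :=
  (rho_hat y r <= rho r * (1 - 1 / 2))
  || (freq (predC (pred1 r)) y <= (1 - rho r) * (1 - 1 / (2 * k%:R))).

Section FiniteSample.
Hypothesis N_gt0 : (0 < N)%N.

Let N_pos : 0 < N%:R :> R.
Proof. by rewrite ltr0n. Qed.

Lemma count_in_le A y : (count_in A y <= N)%N.
Proof. by rewrite /count_in (leq_trans (max_card _)) // card_ord. Qed.

Lemma freq_ge0 A y : 0 <= freq A y.
Proof. by rewrite divr_ge0. Qed.

Lemma freq_le1 A y : freq A y <= 1.
Proof. by rewrite ler_pdivrMr // mul1r ler_nat count_in_le. Qed.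

Lemma rho_hat_in01 y r : 0 <= (rho_hat y r : R) <= 1.
Proof. by rewrite (freq_ge0 (pred1 r) y) (freq_le1 (pred1 r) y). Qed.

Lemma freqC A y : freq (predC A) y = 1 - freq A y.
Proof.
have countC : (count_in A y + count_in (predC A) y = N)%N.
  rewrite /count_in -[RHS](card_ord N) -(cardsC [set j | A (y j)]); congr (_ + _)%N.
  by apply: eq_card => j; rewrite !inE.
have : (count_in A y)%:R + (count_in (predC A) y)%:R = N%:R :> R by rewrite -natrD countC.
by rewrite /freq -[X in X - _](divff (lt0r_neq0 N_pos)) -mulrBl => <-; congr (_ / _); lra.
Qed.

Lemma freq_lower_tail A e : 0 <= e ->
  P (fun y => freq A y <= mass A * (1 - e)) <= expR (- (N%:R * mass A * e ^+ 2 / 2)).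
Proof.
move=> e0.
apply: le_trans (sample_prob_le _ (fun y =>
  - (e * (N%:R * mass A * (1 - e))) <= - e * (count_in A y)%:R) _) _.
  move=> y; rewrite /freq ler_pdivrMr // mulNr lerN2 => /(ler_wpM2l e0).
  by move=> h; apply: (le_trans h); nra.
apply: le_trans (count_chernoff _ _ _) _; rewrite ler_expR.
have := ler_wpM2l (mulr_ge0 (ltW N_pos) (mass_ge0 A)) (expRN_le _ e0).
by rewrite expr2; nra.
Qed.

Lemma freq_upper_tail A s t : 0 <= t < 1 ->
  P (fun y => mass A + s <= freq A y)
    <= expR (N%:R * (mass A * t ^+ 2 / (1 - t) - t * s)).
Proof.
move=> /andP[t0 t1].
apply: le_trans (sample_prob_le _ (fun y =>
  t * ((mass A + s) * N%:R) <= t * (count_in A y)%:R) _) _.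
  by move=> y; rewrite /freq ler_pdivlMr // => /(ler_wpM2l t0).
apply: le_trans (count_chernoff _ _ _) _; rewrite ler_expR.
have expt : expR t <= 1 + t + t ^+ 2 / (1 - t).
  have -> : 1 + t + t ^+ 2 / (1 - t) = (1 - t)^-1 by field; lra.
  exact: expR_le_inv.
have := ler_wpM2l (mulr_ge0 (ltW N_pos) (mass_ge0 A)) expt.
have -> : t ^+ 2 / (1 - t) = t * (t / (1 - t)) by rewrite mulrA -expr2.
nra.
Qed.

Lemma label_far_prob k r l : (0 < k)%N -> 1 / (4 * k%:R ^+ 2) < rho r <= 1 / 2 ->
  0 <= l -> 132 * k%:R ^+ 2 * l <= N%:R -> P (label_far k r) <= 2 * expR (- l).
Proof.
move=> k0 /andP[lo hi] l0 hN; set K : R := k%:R in lo hN *.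
have K1 : 1 <= K by rewrite ler1n.
have Kr : 1 < rho r * (4 * K ^+ 2) by move: lo; rewrite ltr_pdivrMr //; nra.
have N0 : 0 <= N%:R :> R by [].
rewrite mulr_natl mulr2n; apply: le_trans (sample_probU _ _) (lerD _ _).
  have e0 : 0 <= 1 / 4 :> R by lra.
  have := freq_lower_tail (pred1 r) _ e0; rewrite mass_pred1 => /le_trans; apply.
  rewrite ler_expR; have := ler_wpM2r (rho_ge0 r) hN; nra.
set t : R := (6 * K)^-1.
have Kt : K * t = 1 / 6 by rewrite /t; field; lra.
have t0 : 0 < t by rewrite /t invr_gt0; lra.
have t01 : 0 <= t < 1 by apply/andP; split; nra.
have := freq_upper_tail (pred1 r) ((1 - rho r) / (3 * K)) _ t01.
rewrite mass_pred1 => /le_trans; apply; rewrite ler_expR.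
have -> : (1 - rho r) / (3 * K) = 2 * t * (1 - rho r) by rewrite /t; field; lra.
have ht : t ^+ 2 / (1 - t) <= 6 / 5 * t ^+ 2.
  by rewrite ler_pdivrMr; [nra | lra].
have hNt : 132 / 36 * l <= N%:R * t ^+ 2.
  have := ler_wpM2r (exprn_ge0 2 (ltW t0)) hN.
  have -> : 132 * K ^+ 2 * l * t ^+ 2 = 132 * l * (K * t) ^+ 2 by ring.
  by rewrite Kt expr2; lra.
have := ler_wpM2l (mulr_ge0 N0 (rho_ge0 r)) ht.
have := mulr_ge0 (mulr_ge0 N0 (exprn_ge0 2 (ltW t0))) (_ : 0 <= 1 / 2 - rho r).
nra.
Qed.

Lemma dominant_far_prob k r l : (0 < k)%N -> 1 / 2 < rho r -> 0 <= l ->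
  16 * l <= N%:R -> 8 * k%:R ^+ 2 * l <= N%:R * (1 - rho r) ->
  P (dominant_far k r) <= 2 * expR (- l).
Proof.
move=> k0 hr l0 hN hNq; set K : R := k%:R in hNq *.
have K1 : 1 <= K by rewrite ler1n.
rewrite mulr_natl mulr2n; apply: le_trans (sample_probU _ _) (lerD _ _).
  have e0 : 0 <= 1 / 2 :> R by lra.
  have := freq_lower_tail (pred1 r) _ e0; rewrite mass_pred1 => /le_trans; apply.
  by rewrite ler_expR; nra.
have e0 : 0 <= 1 / (2 * K) by rewrite divr_ge0 //; lra.
have := freq_lower_tail (predC (pred1 r)) _ e0; rewrite mass_predC1 => /le_trans; apply.
have -> : N%:R * (1 - rho r) * (1 / (2 * K)) ^+ 2 / 2 = N%:R * (1 - rho r) / (8 * K ^+ 2).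
  by field; lra.
by rewrite ler_expR lerN2 ler_pdivlMr; [lra | nra].
Qed.

Lemma phi_rho_hat_ge_half k r y : (0 < k)%N -> ~~ label_far k r y ->
  phi k (rho r) / 2 <= phi k (rho_hat y r).
Proof.
move=> k0; rewrite negb_or -!ltNge => /andP[lo hi].
by apply: phi_ge_half; rewrite ?rho_ge0 ?rho_le1.
Qed.

Lemma phi_rho_hat_ge_quarter k r y : (0 < k)%N -> ~~ dominant_far k r y ->
  phi k (rho r) / 4 <= phi k (rho_hat y r).
Proof.
move=> k0; rewrite negb_or -!ltNge freqC => /andP[lo hi].
by apply: phi_ge_quarter; rewrite ?rho_ge0 ?rho_le1.
Qed.

Lemma heavy_far_prob (A : pred 'I_m) k l : (0 < k)%N ->
  (forall r, A r -> 1 / (4 * k%:R ^+ 2) < rho r <= 1 / 2) ->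
  0 <= l -> 132 * k%:R ^+ 2 * l <= N%:R ->
  P (fun y => [exists r, A r && label_far k r y]) <= m%:R * (2 * expR (- l)).
Proof.
move=> k0 hA l0 hN; apply: le_trans (sample_prob_exists _ _ _) _.
rewrite -[m in m%:R]card_ord; apply: sum_le_card => [|r Ar].
  by rewrite mulr_ge0 ?expR_ge0.
exact: label_far_prob (hA r Ar) l0 hN.
Qed.

Lemma heavy_or_dominant_far_prob (C : bool) s k L l : (0 < k)%N -> 1 / 2 < rho s ->
  0 <= L -> 0 <= l -> 132 * k%:R ^+ 2 * L <= N%:R -> 16 * l <= N%:R ->
  (C -> 8 * k%:R ^+ 2 * l <= N%:R * (1 - rho s)) ->
  P (fun y => [exists r, (1 / (4 * k%:R ^+ 2) < rho r) && (r != s) && label_far k r y]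
              || C && dominant_far k s y)
    <= m%:R * (2 * expR (- L)) + 2 * expR (- l).
Proof.
move=> k0 hs L0 l0 hNL hNl hNC; apply: le_trans (sample_probU _ _) (lerD _ _).
  apply: heavy_far_prob => // r /andP[hr rs]; rewrite hr /=.
  by have := rho_le_compl _ _ rs; lra.
case: C hNC => [hNC|_]; first exact: dominant_far_prob (hNC isT).
by rewrite /sample_prob big_pred0 // mulr_ge0 ?expR_ge0.
Qed.

Lemma tau_hat_ge_balanced k y : (0 < k)%N ->
  \sum_(r < m | rho r <= 1 / (4 * k%:R ^+ 2)) phi k (rho r) <= (1 - tau_of k rho) / 2 ->
  (forall r, 1 / (4 * k%:R ^+ 2) < rho r -> ~~ label_far k r y) ->
  (1 - tau_of k rho) / 4 <= 1 - tau_of k (rho_hat y).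
Proof.
move=> k0 light good; rewrite !one_sub_tau; rewrite one_sub_tau in light.
rewrite (eq_bigl (fun r => ~~ (1 / (4 * k%:R ^+ 2) < rho r))) in light => [|r].
  apply: (sum_ge_quarter _ light) => [r|r hr]; first exact/phi_ge0/rho_hat_in01.
  exact: phi_rho_hat_ge_half (good r hr).
by rewrite leNgt.
Qed.

Lemma tau_hat_ge_dominant k s y : (0 < k)%N -> 1 / 2 < rho s ->
  \sum_(r < m | rho r <= 1 / (4 * k%:R ^+ 2)) phi k (rho r) <= (1 - tau_of k rho) / 2 ->
  (forall r, 1 / (4 * k%:R ^+ 2) < rho r -> r != s -> ~~ label_far k r y) ->
  ((k == 1)%N || (1 / 5 < 1 - rho s) -> ~~ dominant_far k s y) ->
  (1 - tau_of k rho) / 8 <= 1 - tau_of k (rho_hat y).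
Proof.
move=> k0 hs light good_rest good_top; rewrite !one_sub_tau; rewrite one_sub_tau in light.
have heavy_s : 1 / (4 * k%:R ^+ 2) < rho s.
  have K1 : 1 <= k%:R ^+ 2 :> R by rewrite exprn_ege1 // ler1n.
  by apply: le_lt_trans hs; rewrite ler_pdivrMr; nra.
rewrite (eq_bigl (fun r => ~~ (1 / (4 * k%:R ^+ 2) < rho r))) in light => [|r]; last first.
  by rewrite leNgt.
apply: (sum_ge_eighth _ _ light s heavy_s) => [r|r|r hr rs|].
- by apply: phi_ge0; rewrite rho_ge0 rho_le1.
- exact/phi_ge0/rho_hat_in01.
- exact: phi_rho_hat_ge_half (good_rest r hr rs).
have [hC|/norP[k_neq1]] := boolP ((k == 1)%N || (1 / 5 < 1 - rho s)).
  by left; exact: phi_rho_hat_ge_quarter (good_top hC).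
rewrite -leNgt => q_le; right; apply: le_trans (sum_phi_ge_dominant k s).
apply: phi_le_dominant; first by rewrite ltn_neqAle eq_sym k_neq1.
by rewrite rho_le1 andbT; lra.
Qed.

End FiniteSample.
End Sampling.
End LabelDistribution.

Lemma sample_size_dominant {R : realType} {k m : nat} {Delta q n : R} :
  (0 < k)%N -> (0 < m)%N -> 0 < Delta < 1 -> 0 < q ->
  164 * k%:R ^+ 2 * ln (4 * m%:R / Delta) + 25 * ln (2 / Delta) / q <= n ->
  [/\ 132 * k%:R ^+ 2 * ln (4 * m%:R / Delta) <= n, 16 * ln (4 / Delta) <= n
    & (k == 1)%N || (1 / 5 < q) -> 8 * k%:R ^+ 2 * ln (4 / Delta) <= n * q].
Proof.
move=> k0 m0 /andP[D0 D1] q0 hn.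
have K1 : 1 <= k%:R ^+ 2 :> R by rewrite exprn_ege1 // ler1n.
have M1 : 1 <= m%:R :> R by rewrite ler1n.
set L := ln (4 * m%:R / Delta) in hn *; set l2 := ln (2 / Delta) in hn *.
have l2_gt0 : 0 < l2 by apply: ln_gt0; rewrite ltr_pdivlMr // mul1r; lra.
have ln2_le : ln 2 <= l2 by rewrite ler_ln ?posrE ?divr_gt0 // ler_pdivlMr //; lra.
have l4E : ln (4 / Delta) = ln 2 + l2.
  by rewrite -lnM ?posrE ?divr_gt0 // mulrA; congr (ln (_ / _)); lra.
have l4_le : ln (4 / Delta) <= L.
  by rewrite ler_ln ?posrE ?divr_gt0 ?mulr_gt0 // ?ltr0n // ler_pM2r ?invr_gt0 //; lra.
have hnq : 164 * k%:R ^+ 2 * L * q + 25 * l2 <= n * q.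
  by have := ler_wpM2r (ltW q0) hn; rewrite mulrDl divfK ?gt_eqF.
have ln2_gt0 : 0 < ln 2 :> R by apply: ln_gt0; lra.
have L_ge0 : 0 <= L by lra.
have n_ge : 164 * k%:R ^+ 2 * L <= n by have := divr_ge0 (ltW l2_gt0) (ltW q0); nra.
rewrite l4E in l4_le *; split; [nra | nra | case/orP => [/eqP k1 | q5]].
  by rewrite k1 expr1n in hnq *; have := mulr_ge0 L_ge0 (ltW q0); nra.
have kL : k%:R ^+ 2 * (ln 2 + l2) <= k%:R ^+ 2 * L by rewrite ler_wpM2l ?exprn_ge0.
have n_ge0 : 0 <= n by have := mulr_ge0 (exprn_ge0 2 (ler0n R k)) L_ge0; nra.
by have := mulr_ge0 n_ge0 (_ : 0 <= q - 1 / 5); lra.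
Qed.

Lemma tau_hat_balanced {R : realType} {m : nat} {rho : 'I_m -> R} {k N : nat} {Delta : R} :
  (0 < m)%N -> (forall r, 0 <= rho r) -> \sum_(r < m) rho r = 1 -> (0 < k)%N ->
  \sum_(r < m | rho r <= 1 / (4 * k%:R ^+ 2)) phi k (rho r) <= (1 - tau_of k rho) / 2 ->
  0 < Delta < 1 -> rho_max rho <= 1 / 2 ->
  132 * k%:R ^+ 2 * ln (2 * m%:R / Delta) <= N%:R ->
  1 - Delta <= sample_prob rho (fun y : {ffun 'I_N -> 'I_m} =>
    (1 - tau_of k rho) / 4 <= 1 - tau_of k (rho_hat y)).
Proof.
move=> m0 rho_ge0 rho_sum1 k0 light /andP[D0 D1] max_le hN.
have M1 : 1 <= m%:R :> R by rewrite ler1n.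
set l := ln (2 * m%:R / Delta) in hN.
have l_gt0 : 0 < l by apply: ln_gt0; rewrite ltr_pdivlMr // mul1r; lra.
have N0 : (0 < N)%N.
  by rewrite -(ltr0n R) (lt_le_trans _ hN) // !mulr_gt0 // ltr0n.
pose heavy r := 1 / (4 * k%:R ^+ 2) < rho r.
pose bad (y : {ffun 'I_N -> 'I_m}) := [exists r, heavy r && label_far rho k r y].
have bad_prob : sample_prob rho bad <= Delta.
  apply: le_trans (heavy_far_prob _ rho_ge0 rho_sum1 N0 heavy k l k0 _ (ltW l_gt0) hN) _.
    by move=> r hr; apply/andP; split => //; apply: le_trans max_le; exact: le_bigmax.
  rewrite expRN_ln ?divr_gt0 ?mulr_gt0 ?ltr0n //.
  by have -> : m%:R * (2 / (2 * m%:R / Delta)) = Delta by field; lra.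
suff good_target y : ~~ bad y -> (1 - tau_of k rho) / 4 <= 1 - tau_of k (rho_hat y).
  by have := sample_prob_compl _ rho_ge0 rho_sum1 _ _ good_target; lra.
move=> /existsPn good.
apply: (tau_hat_ge_balanced _ rho_ge0 rho_sum1 N0 k y k0 light) => r hr.
by have := good r; rewrite /heavy hr.
Qed.

Lemma tau_hat_dominant {R : realType} {m : nat} {rho : 'I_m -> R} {k N : nat} {Delta : R} :
  (2 <= m)%N -> (forall r, 0 < rho r) -> \sum_(r < m) rho r = 1 -> (0 < k)%N ->
  \sum_(r < m | rho r <= 1 / (4 * k%:R ^+ 2)) phi k (rho r) <= (1 - tau_of k rho) / 2 ->
  0 < Delta < 1 -> 1 / 2 < rho_max rho ->
  164 * k%:R ^+ 2 * ln (4 * m%:R / Delta) + 25 * ln (2 / Delta) / (1 - rho_max rho)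
    <= N%:R ->
  1 - Delta <= sample_prob rho (fun y : {ffun 'I_N -> 'I_m} =>
    (1 - tau_of k rho) / 8 <= 1 - tau_of k (rho_hat y)).
Proof.
move=> m2 rho_gt0 rho_sum1 k0 light D max_gt hN.
have rho_ge0 r : 0 <= rho r := ltW (rho_gt0 r).
have m0 : (0 < m)%N := ltnW m2.
have [s _ maxE] := eq_bigmax (Ordinal m0) xpredT rho isT (fun r _ => rho_ge0 r).
rewrite -/(rho_max rho) in maxE; rewrite maxE in max_gt hN.
have [s' s's] : exists s', s' != s.
  case: (eqVneq s (Ordinal m0)) => [->|ne]; first by exists (Ordinal m2).
  by exists (Ordinal m0); rewrite eq_sym.
have q_gt0 : 0 < 1 - rho s.
  exact: lt_le_trans (rho_gt0 s') (rho_le_compl _ rho_ge0 rho_sum1 _ _ s's).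
have [hN1 hN2 hN3] := sample_size_dominant k0 m0 D q_gt0 hN.
move: D => /andP[D0 D1]; have M1 : 1 <= m%:R :> R by rewrite ler1n.
have N0 : (0 < N)%N.
  by rewrite -(ltr0n R) (lt_le_trans _ hN2) // mulr_gt0 ?ln_gt0 ?ltr_pdivlMr //; lra.
set L := ln (4 * m%:R / Delta) in hN1; set l4 := ln (4 / Delta) in hN2 hN3.
have L_ge0 : 0 <= L by apply/ln_ge0; rewrite ler_pdivlMr // mul1r; lra.
have l4_ge0 : 0 <= l4 by apply/ln_ge0; rewrite ler_pdivlMr // mul1r; lra.
pose heavy r := 1 / (4 * k%:R ^+ 2) < rho r.
pose C := (k == 1)%N || (1 / 5 < 1 - rho s).
pose bad (y : {ffun 'I_N -> 'I_m}) :=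
  [exists r, heavy r && (r != s) && label_far rho k r y] || C && dominant_far rho k s y.
have bad_prob : sample_prob rho bad <= Delta.
  apply: le_trans (heavy_or_dominant_far_prob _ rho_ge0 rho_sum1 N0 C s k L l4 k0 max_gt
    L_ge0 l4_ge0 hN1 hN2 hN3) _.
  rewrite !expRN_ln ?divr_gt0 ?mulr_gt0 ?ltr0n //.
  by have -> : m%:R * (2 / (4 * m%:R / Delta)) + 2 / (4 / Delta) = Delta by field; lra.
suff good_target y : ~~ bad y -> (1 - tau_of k rho) / 8 <= 1 - tau_of k (rho_hat y).
  by have := sample_prob_compl _ rho_ge0 rho_sum1 _ _ good_target; lra.
rewrite negb_or => /andP[/existsPn good_rest good_top].
apply: (tau_hat_ge_dominant _ rho_ge0 rho_sum1 N0 k s y k0 max_gt light) => [r hr rs|hC].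
  by have := good_rest r; rewrite /heavy hr rs.
by move: good_top; rewrite /C hC.
Qed.

Theorem mainTheorem3 (R : realType) (m : nat) (rho : 'I_m -> R) (k N : nat)
  (Delta : R) :
  (2 <= m)%N ->
  (forall r, 0 < rho r) ->
  \sum_(r < m) rho r = 1 ->
  (1 <= k)%N ->
  \sum_(r < m | rho r <= 1 / (4 * (k%:R) ^+ 2)) rho r * (1 - rho r) ^+ k
    <= (1 - tau_of k rho) / 2 ->
  0 < Delta < 1 ->
  (rho_max rho <= 1 / 2 ->
   132 * (k%:R) ^+ 2 * ln (2 * m%:R / Delta) <= N%:R ->
   1 - Delta <= sample_prob rho
     (fun y : {ffun 'I_N -> 'I_m} =>
        (1 - tau_of k rho) / 4 <= 1 - tau_of k (rho_hat y)))
  /\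
  (1 / 2 < rho_max rho ->
   164 * (k%:R) ^+ 2 * ln (4 * m%:R / Delta)
     + 25 * ln (2 / Delta) / (1 - rho_max rho) <= N%:R ->
   1 - Delta <= sample_prob rho
     (fun y : {ffun 'I_N -> 'I_m} =>
        (1 - tau_of k rho) / 8 <= 1 - tau_of k (rho_hat y))).
Proof.
move=> m2 rho_gt0 rho_sum1 k0 light D; split.
  exact: (tau_hat_balanced (ltnW m2) (fun r => ltW (rho_gt0 r)) rho_sum1 k0 light D).
exact: tau_hat_dominant.
Qed.
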